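(* Let $\epsilon\ge0$, let $I,J\subseteq\mathbb{R}$ be closed bounded intervals with $|I|\le|J|$, and let $\mu$ and $\nu$ be the uniform probability measures on $I$ and $J$. Consider binary classification in which the two labels are equally likely, the label associated with $\mu$ has input distribution $\mu$ and the other label has input distribution $\nu$, classifiers are indexed by closed sets $A\subseteq\mathbb{R}$ (output the $\mu$-label on $A$ and the $\nu$-label on $A^c$), with $0$-$1$ loss and adversarial risk $\mathbb{E}_{(x,y)}\big[\sup_{|x'-x|\le\epsilon}(\text{loss at }x')\big]$. Then the optimal robust risk (infimum over closed $A$) equals $\tfrac12\nu(I^{2\epsilon})$, and the classifier with $A=I^{\epsilon}$ is an optimal robust classifier.
   Context: For $S\subseteq\mathbb{R}$ and $\delta\ge0$, $S^\delta=\{x:|x-s|\le\delta\text{ for some }s\in S\}$. *)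

From HB Require Import structures.
From mathcomp Require Import all_boot all_order all_algebra.
From mathcomp Require Import all_classical all_reals all_analysis.
Set Implicit Arguments. Unset Strict Implicit. Unset Printing Implicit Defensive.
Import Order.TTheory GRing.Theory Num.Theory.
Import numFieldNormedType.Exports.
Local Open Scope classical_set_scope.
Local Open Scope ring_scope.

Definition thicken {R : realType} (S : set R) (delta : R) : set R :=
  [set x | exists2 s, S s & `|x - s| <= delta].

(* Labels: true = the mu-label, false = the nu-label.
   Classifier indexed by A outputs the mu-label on A, the nu-label on ~` A. *)
Definition classify {R : realType} (A : set R) (x : R) : bool :=
  `[< A x >].

Definition loss01 {R : realType} (A : set R) (x : R) (y : bool) : R :=
  if classify A x == y then 0 else 1.

Definition adv_loss {R : realType} (eps : R) (A : set R) (x : R) (y : bool)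
  : \bar R :=
  ereal_sup [set (loss01 A x' y)%:E | x' in [set x' | `|x' - x| <= eps]].

Definition adv_risk {R : realType} (mu nu : set R -> \bar R) (eps : R)
  (A : set R) : \bar R :=
  (2^-1%:E * (\int[mu]_x adv_loss eps A x true)
   + 2^-1%:E * (\int[nu]_x adv_loss eps A x false))%E.

From HB Require Import structures.
From mathcomp Require Import all_boot all_order all_algebra.
From mathcomp Require Import all_classical all_reals all_analysis.
From mathcomp Require Import lra.
Import Order.TTheory GRing.Theory Num.Theory.
Import numFieldNormedType.Exports.
Set Implicit Arguments. Unset Strict Implicit. Unset Printing Implicit Defensive.
Local Open Scope classical_set_scope.
Local Open Scope ring_scope.

(* With G := (~` A)^eps and H := A^eps, the adversarial risk of a closed A is
   (mu G + nu H) / 2.  For A = I^eps the set G misses I and H = I^(2 eps), which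
   gives the value nu (I^(2 eps)) / 2.  Conversely, let E := I \ G be the points
   of I whose eps-ball lies in A; then E^(2 eps) is contained in H and in
   I^(2 eps).  In dimension one E^(2 eps) has Lebesgue measure at least
   |E| + 4 eps, since it contains E and the open intervals of length 2 eps to
   the left of inf E and to the right of sup E.  Hence, using |I| <= |J|,
   nu (I^(2 eps) \ H) <= (|I| - |E|) / |J| <= (|I| - |E|) / |I| = mu (I \ E)
   <= mu G, so nu (I^(2 eps)) <= nu H + mu G.  When E is empty this holds
   because mu G = 1. *)

Section thicken.
Variable R : realType.
Implicit Types (S T : set R) (r : R).

Lemma thickenS S T r : S `<=` T -> thicken S r `<=` thicken T r.
Proof. by move=> ST x [s /ST Ts xs]; exists s. Qed.

Lemma thicken_itv (a b r : R) : a <= b -> 0 <= r ->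
  thicken `[a, b] r = `[a - r, b + r]%classic.
Proof.
move=> ab r0; apply/seteqP; split=> x /=.
  by case=> s /=; rewrite !in_itv/= ler_norml => /andP[? ?] /andP[? ?]; lra.
rewrite in_itv/= => /andP[xar xbr].
have [xa|ax] := ltP x a.
  by exists a; rewrite /= ?in_itv/= ?lexx ?ab// ler_norml; apply/andP; split; lra.
have [bx|xb] := ltP b x.
  by exists b; rewrite /= ?in_itv/= ?lexx ?ab// ler_norml; apply/andP; split; lra.
by exists x; rewrite /= ?in_itv/= ?ax ?xb// subrr normr0.
Qed.

Lemma closed_thicken_itv (a b r : R) : a <= b -> 0 <= r ->
  closed (thicken `[a, b] r).
Proof. by move=> ab r0; rewrite thicken_itv//; exact: interval_closed. Qed.

Lemma thicken_twice S r : thicken (thicken S r) r = thicken S (2 * r).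
Proof.
apply/seteqP; split=> x /=.
  case=> y [s Ss ys] xy; exists s => //; move: xy ys.
  by rewrite !ler_norml => /andP[? ?] /andP[? ?]; apply/andP; split; lra.
case=> s Ss; rewrite ler_norml => /andP[? ?].
exists ((x + s) / 2); last by rewrite ler_norml; apply/andP; split; lra.
by exists s => //; rewrite ler_norml; apply/andP; split; lra.
Qed.

Lemma thicken_erosion_sub S r : thicken (~` thicken (~` S) r) r `<=` S.
Proof.
move=> x [y nGy xy]; apply: contrapT => nSx; apply: nGy.
by exists x => //; rewrite distrC.
Qed.

Lemma thicken_compl_thicken_sub S r : thicken (~` thicken S r) r `<=` ~` S.
Proof. by rewrite -[in thicken S r](setCK S); exact: thicken_erosion_sub. Qed.

Lemma open_thicken S r : open S -> open (thicken S r).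
Proof.
move=> oS.
have -> : thicken S r = \bigcup_(t in [set t | `|t| <= r]) ((+%R^~ t) @^-1` S).
  apply/seteqP; split=> x.
    by case=> s Ss xs; exists (s - x); [rewrite /= distrC | rewrite /= addrC subrK].
  case=> t /= tr Sxt; exists (x + t) => //.
  by rewrite opprD addrA subrr sub0r normrN.
apply: bigcup_open => t _; apply: open_comp => // x _.
exact: continuousD (cvg_id) (cvg_cst t).
Qed.

Lemma itv_inf_sub_thicken S r : has_inf S -> `]inf S - r, inf S[ `<=` thicken S r.
Proof.
move=> infS x /=; rewrite in_itv/= => /andP[rx xS].
have [|s Ss sx] := @inf_adherent _ S (x - (inf S - r)) _ infS; first by lra.
have := ge_inf infS.2 Ss; exists s => //; rewrite ler_norml; apply/andP; split; lra.
Qed.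

Lemma itv_sup_sub_thicken S r : has_sup S -> `]sup S, sup S + r[ `<=` thicken S r.
Proof.
move=> supS x /=; rewrite in_itv/= => /andP[Sx xr].
have [|s Ss sx] := @sup_adherent _ S (sup S + r - x) _ supS; first by lra.
have := ub_le_sup supS.2 Ss; exists s => //; rewrite ler_norml; apply/andP; split; lra.
Qed.

End thicken.

Section lebesgue_measure_thicken.
Variable R : realType.
Local Notation lambda := (@lebesgue_measure R).

Lemma lebesgue_measure_itvE (b1 b2 : bool) (u v : R) : u <= v ->
  lambda [set` Interval (BSide b1 u) (BSide b2 v)] = (v - u)%:E.
Proof.
move=> uv; rewrite lebesgue_measure_itv/= -EFinD; case: ifPn => // uv'.
suff -> : u = v by rewrite subrr.
by apply/eqP; rewrite eq_le uv/= leNgt; apply: contra uv'.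
Qed.

Lemma measurable_thicken_itv (a b r : R) : a <= b -> 0 <= r ->
  measurable (thicken `[a, b]%classic r).
Proof. by move=> ab r0; rewrite thicken_itv//; exact: measurable_itv. Qed.

Lemma lebesgue_measure_thicken_itv (a b r : R) : a <= b -> 0 <= r ->
  lambda (thicken `[a, b]%classic r) = (b - a + 2 * r)%:E.
Proof.
move=> ab r0; rewrite thicken_itv// lebesgue_measure_itvE; last lra.
by congr EFin; lra.
Qed.

Lemma lebesgue_measure_sub_thicken (E : set R) (r : R) :
  measurable E -> has_inf E -> has_sup E -> 0 <= r ->
  exists2 K, measurable K /\ K `<=` thicken E r
    & lambda K = (lambda E + (2 * r)%:E)%E.
Proof.
move=> mE infE supE r_ge0.
have infE_le_supE : inf E <= sup E.
  have [x Ex] := infE.1.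
  exact: le_trans (ge_inf infE.2 Ex) (ub_le_sup supE.2 Ex).
pose left := `]inf E - r, inf E[%classic.
pose right := `]sup E, sup E + r[%classic.
have mleft : measurable left by exact: measurable_itv.
have mright : measurable right by exact: measurable_itv.
exists (left `|` E `|` right).
  split; first by apply: measurableU => //; exact: measurableU.
  move=> x [[/itv_inf_sub_thicken|Ex]|/itv_sup_sub_thicken]; try exact.
  by exists x; rewrite // subrr normr0.
have left_E : left `&` E = set0.
  apply/seteqP; split=> // x [].
  rewrite /left/= in_itv/= => /andP[_ xinf] /(ge_inf infE.2).
  by rewrite leNgt xinf.
have leftE_right : (left `|` E) `&` right = set0.
  apply/seteqP; split=> // x [[|/(ub_le_sup supE.2)]]; rewrite /left /right/= ?in_itv/=.
    by move=> /andP[_ xinf] /andP[supx _]; move: infE_le_supE; lra.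
  by move=> xsup /andP[supx _]; move: xsup; rewrite leNgt supx.
rewrite !(measureU lebesgue_measure)//; last exact: measurableU.
rewrite /left /right /= !lebesgue_measure_itvE; [|lra|lra].
by rewrite addeAC addeC -EFinD; congr (_ + _%:E)%E; lra.
Qed.

End lebesgue_measure_thicken.

Lemma measure_le_integral_indic d (T : measurableType d) (R : realType)
    (mu : {measure set T -> \bar R}) (K H : set T) :
  measurable K -> K `<=` H -> (mu K <= \int[mu]_x (\1_H x)%:E)%E.
Proof.
move=> mK KH.
have -> : mu K = (\int[mu]_x (\1_K x)%:E)%E by rewrite integral_indic// setIT.
rewrite !ge0_integralE => [|x _|x _]; rewrite ?lee_fin//.
apply: ereal_sup_le => _ [h hK <-]; exists h => // x.
apply: le_trans (hK x) _; rewrite !patch_setT lee_fin !indicE.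
by case: (boolP (x \in K)) => [/set_mem/KH/mem_set->|_]; case: (x \in H).
Qed.

Lemma uniform_probE (R : realType) (a b : R) (ab : a < b) (S : set R) :
  measurable S ->
  uniform_prob ab S = ((b - a)^-1%:E * lebesgue_measure (S `&` `[a, b]%classic))%E.
Proof.
move=> mS; rewrite /uniform_prob integral_uniform_pdf -integral_cst//; last first.
  exact: measurableI.
apply: eq_integral => x; rewrite inE => -[_ /=]; rewrite in_itv/= => xab.
by rewrite /uniform_pdf xab.
Qed.

(* [uniform_prob] is a measure on the sigma-algebra generated by half-open
   intervals, whereas [adv_risk] integrates over the default measurable
   structure of [R]; this alias carries the same measure on the latter. *)
Definition uniform_probR (R : realType) (a b : R) (ab : a < b) : set R -> \bar R :=
  uniform_prob ab.

HB.instance Definition _ (R : realType) (a b : R) (ab : a < b) :=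
  isMeasure.Build default_measure_display R R (uniform_probR ab)
   (measure0 (uniform_prob ab)) (measure_ge0 (uniform_prob ab))
   (@measure_semi_sigma_additive _ _ _ (uniform_prob ab)).

Section adversarial_risk.
Variables (R : realType) (eps : R).
Hypothesis eps_ge0 : 0 <= eps.
Local Open Scope ereal_scope.

Lemma adv_lossE (A : set R) (y : bool) (x : R) :
  adv_loss eps A x y = (\1_(thicken [set x' | classify A x' != y] eps) x)%:E.
Proof.
rewrite /adv_loss indicE; apply/le_anti/andP; split.
  apply: ge_ereal_sup => _ [x' xx' <-]; rewrite lee_fin /loss01.
  case: eqP => [_|/eqP Ax'y]; first by case: (_ \in _).
  by rewrite mem_set//; exists x' => //; rewrite /= distrC.
apply: le_ereal_sup_tmp; case: (boolP (x \in _)) => [/set_mem[x' Ax'y xx']|_].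
  exists (loss01 A x' y)%:E; last by rewrite /loss01 (negbTE Ax'y).
  by exists x' => //; rewrite /= distrC.
exists (loss01 A x y)%:E; first by exists x => //; rewrite /= subrr normr0.
by rewrite lee_fin /loss01; case: ifP.
Qed.

Lemma adv_loss_true (A : set R) (x : R) :
  adv_loss eps A x true = (\1_(thicken (~` A) eps) x)%:E.
Proof.
rewrite adv_lossE; congr ((\1_(thicken _ _) _)%:E).
by apply/seteqP; split=> x' /=; rewrite /classify; case: asboolP.
Qed.

Lemma adv_loss_false (A : set R) (x : R) :
  adv_loss eps A x false = (\1_(thicken A eps) x)%:E.
Proof.
rewrite adv_lossE; congr ((\1_(thicken _ _) _)%:E).
by apply/seteqP; split=> x' /=; rewrite /classify; case: asboolP.
Qed.

Lemma adv_riskE (P Q : {measure set R -> \bar R}) (A : set R) : closed A ->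
  adv_risk P Q eps A = 2^-1%:E * P (thicken (~` A) eps)
                       + 2^-1%:E * \int[Q]_x (\1_(thicken A eps) x)%:E.
Proof.
move=> cA; rewrite /adv_risk.
under eq_integral do rewrite adv_loss_true//.
under [in X in _ + X]eq_integral do rewrite adv_loss_false//.
rewrite integral_indic ?setIT//.
have oG : open (thicken (~` A) eps) by apply: open_thicken; exact: closed_openC.
exact: measurable_realfun.open_measurable oG.
Qed.

End adversarial_risk.

Section uniform_intervals.
Variables (R : realType) (eps a b c d : R).
Hypotheses (eps_ge0 : 0 <= eps) (ab : a < b) (cd : c < d) (hIJ : b - a <= d - c).
Local Notation mu := (uniform_prob ab).
Local Notation nu := (uniform_prob cd).
Local Notation lambda := (@lebesgue_measure R).
Local Notation I := `[a, b]%classic.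
Local Notation I2 := (thicken `[a, b]%classic (2 * eps)).

Let eps2_ge0 : 0 <= 2 * eps. Proof. by rewrite mulr_ge0. Qed.

Let measurable_I2 : measurable I2.
Proof. exact: measurable_thicken_itv (ltW ab) eps2_ge0. Qed.

Lemma uniform_prob_le_lebesgue (S : set R) : measurable S ->
  (nu S <= (b - a)^-1%:E * lambda S)%E.
Proof.
move=> mS; rewrite uniform_probE//; apply: lee_pmul => //.
- by rewrite lee_fin invr_ge0 subr_ge0 ltW.
- by rewrite lee_fin lef_pV2 ?posrE ?subr_gt0.
- by apply: le_measure; rewrite ?inE//; exact: measurableI.
Qed.

Lemma lebesgue_measure_thicken_itvD (E K : set R) :
  measurable E -> measurable K -> E `<=` I -> K `<=` I2 ->
  lambda K = (lambda E + (2 * (2 * eps))%:E)%E ->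
  lambda (I2 `\` K) = lambda (I `\` E).
Proof.
move=> mE mK EI KI2 lamK.
have mI : measurable I by exact: measurable_itv.
have lamI : lambda I = (b - a)%:E by rewrite lebesgue_measure_itvE// ltW.
have lamI2 := lebesgue_measure_thicken_itv (ltW ab) eps2_ge0.
have lamE_fin : lambda E \is a fin_num.
  rewrite ge0_fin_numE ?measure_ge0//; apply: le_lt_trans (ltry (b - a)).
  by rewrite -lamI le_measure ?inE.
rewrite !measureD//= ?lamI ?lamI2 ?ltry// (setIidr EI) (setIidr KI2) lamK.
by rewrite -(fineK lamE_fin) -EFinD -EFinB; congr EFin; lra.
Qed.

Lemma uniform_prob_thicken_itvD_le (E K : set R) :
  measurable E -> measurable K -> E `<=` I -> K `<=` I2 ->
  lambda K = (lambda E + (2 * (2 * eps))%:E)%E ->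
  (nu (I2 `\` K) <= mu (I `\` E))%E.
Proof.
move=> mE mK EI KI2 lamK.
have mIE : measurable (I `\` E) by apply: measurableD => //; exact: measurable_itv.
apply: le_trans (uniform_prob_le_lebesgue (measurableD measurable_I2 mK)) _.
rewrite (lebesgue_measure_thicken_itvD mE mK EI KI2 lamK) uniform_probE//.
by rewrite setIidl// => x [].
Qed.

Lemma uniform_prob_le_adv_loss_sum (A : set R) : closed A ->
  (nu I2 <= mu (thicken (~` A) eps)
            + \int[uniform_probR cd]_x (\1_(thicken A eps) x)%:E)%E.
Proof.
move=> cA; set G := thicken (~` A) eps.
have oG : open G by apply: open_thicken; exact: closed_openC.
have mG : measurable G := measurable_realfun.open_measurable oG.
have mI : measurable I by exact: measurable_itv.
pose E := I `\` G.
have mE : measurable E by exact: measurableD.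
have [E0|/eqP/set0P [x0 Ex0]] := pselect (E = set0).
  have IG : I `<=` G.
    by move=> x Ix; apply: contrapT => nGx; suff : E x by rewrite E0.
  apply: le_trans (leeDl _ (integral_ge0 _ _)) => [|x _]; last by rewrite lee_fin.
  apply: le_trans (@probability_le1 _ _ _ nu _ measurable_I2) _.
  have <- : mu I = 1%E by rewrite /uniform_prob integral_uniform_pdf1.
  by apply: le_measure; rewrite ?inE.
have EI : E `<=` I by move=> x [].
have Ebnd : forall x, E x -> a <= x <= b by move=> x /EI; rewrite /= in_itv.
have infE : has_inf E by split; [exists x0 | exists a => x /Ebnd/andP[]].
have supE : has_sup E by split; [exists x0 | exists b => x /Ebnd/andP[]].
have [K [mK KE] lamK] := lebesgue_measure_sub_thicken mE infE supE eps2_ge0.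
have KI2 : K `<=` I2 by move=> x /KE; exact: thickenS.
have KH : K `<=` thicken A eps.
  move=> x /KE; rewrite -thicken_twice; apply: thickenS => y Ey.
  by apply: thicken_erosion_sub; move: y Ey; apply: thickenS => y [].
rewrite (measureDI nu measurable_I2 mK) (setIidr KI2); apply: leeD.
  apply: le_trans (uniform_prob_thicken_itvD_le mE mK EI KI2 lamK) _.
  apply: le_measure; rewrite ?inE//; first exact: measurableD.
  by move=> x [Ix nEx]; apply: contrapT => nGx; apply: nEx.
exact: measure_le_integral_indic (uniform_probR cd) _ _ mK KH.
Qed.

Lemma adv_risk_ge (A : set R) : closed A ->
  (2^-1%:E * nu I2 <= adv_risk mu nu eps A)%E.
Proof.
move=> cA; rewrite (adv_riskE _ (uniform_probR ab) (uniform_probR cd))//.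
rewrite -ge0_muleDr ?measure_ge0//; last by apply: integral_ge0 => x _; rewrite lee_fin.
by apply: lee_wpmul2l; [rewrite lee_fin invr_ge0 | exact: uniform_prob_le_adv_loss_sum].
Qed.

Lemma adv_risk_thicken_itv :
  adv_risk mu nu eps (thicken I eps) = (2^-1%:E * nu I2)%E.
Proof.
have oG : open (thicken (~` thicken I eps) eps).
  by apply: open_thicken; exact/closed_openC/closed_thicken_itv/eps_ge0/ltW.
have mG : measurable (thicken (~` thicken I eps) eps).
  exact: measurable_realfun.open_measurable oG.
have G_null : mu (thicken (~` thicken I eps) eps) = 0%E.
  rewrite uniform_probE// (_ : _ `&` _ = set0) ?measure0 ?mule0//.
  by apply/seteqP; split=> // x [/thicken_compl_thicken_sub].
rewrite (adv_riskE _ (uniform_probR ab) (uniform_probR cd))//; last first.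
  exact/closed_thicken_itv/eps_ge0/ltW.
rewrite -[RHS]add0e -[in RHS](mule0 2^-1%:E); congr (_ * _ + _ * _)%E.
  exact: G_null.
by rewrite thicken_twice integral_indic ?setIT.
Qed.

End uniform_intervals.

Theorem theorem9 (R : realType) (eps a b c d : R)
  (heps : 0 <= eps) (ab : a < b) (cd : c < d) (hIJ : b - a <= d - c) :
  let mu := uniform_prob ab in
  let nu := uniform_prob cd in
  let I := `[a, b]%classic in
  ereal_inf [set adv_risk mu nu eps A | A in [set A : set R | closed A]]
    = (2^-1%:E * nu (thicken I (2 * eps)))%E
  /\ adv_risk mu nu eps (thicken I eps)
    = ereal_inf [set adv_risk mu nu eps A | A in [set A : set R | closed A]].
Proof.
move=> mu nu I.
have risk_Ieps := adv_risk_thicken_itv heps ab cd.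
suff inf_risk : ereal_inf [set adv_risk mu nu eps A | A in [set A | closed A]]
    = (2^-1%:E * nu (thicken I (2 * eps)))%E by rewrite inf_risk risk_Ieps.
apply/le_anti/andP; split.
  rewrite -risk_Ieps; apply: ereal_inf_lbound; exists (thicken I eps) => //.
  exact/closed_thicken_itv/heps/ltW.
by apply: le_ereal_inf_tmp => _ [A cA <-]; exact: adv_risk_ge.
Qed.
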